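(* Let $R:\mathbb{T}^2\to\mathbb{T}^2$ be a linear involution of the torus $\mathbb{T}^2=\mathbb{R}^2/\mathbb{Z}^2$, i.e. $R$ is induced by an integer matrix $A$ with $\det A=\pm1$ and $R\circ R=\mathrm{Id}$, and assume $R\neq \pm\,\mathrm{Id}$. Then there exists a linear Anosov diffeomorphism $f$ of $\mathbb{T}^2$ which is $R$-reversible, i.e. $R\circ f=f^{-1}\circ R$.
   Context: A linear diffeomorphism of $\mathbb{T}^2$ is one induced (via the projection $\mathbb{R}^2\to\mathbb{R}^2/\mathbb{Z}^2$) by a $2\times 2$ matrix with integer entries and determinant $\pm1$; such maps preserve the normalized area. A linear Anosov diffeomorphism is one induced by such a matrix $L$ having no eigenvalue on the unit circle. A diffeomorphism $R$ is an involution if $R\circ R=\mathrm{Id}$, and $f$ is $R$-reversible if $R\circ f=f^{-1}\circ R$. *)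

(* torus T^2 = R^2/Z^2 modelled by column vectors in R^2
   (R : realType) up to integer translations. *)
From HB Require Import structures.
From mathcomp Require Import all_boot all_order all_algebra all_field.
From mathcomp Require Import reals.
Set Implicit Arguments. Unset Strict Implicit. Unset Printing Implicit Defensive.
Import Order.TTheory GRing.Theory Num.Theory.
Local Open Scope ring_scope.

Definition tor_eq (R : realType) (x y : 'cV[R]_2) : Prop :=
  forall i : 'I_2, (x i 0 - y i 0) \is a Num.int.

Definition lin_map (R : realType) (A : 'M[int]_2) (x : 'cV[R]_2) : 'cV[R]_2 :=
  map_mx (fun z : int => z%:~R) A *m x.

Definition unimodular (A : 'M[int]_2) : Prop :=
  \det A = 1 \/ \det A = -1.

Definition hyperbolic (L : 'M[int]_2) : Prop :=
  forall a : algC, eigenvalue (map_mx (fun z : int => z%:~R) L) a -> `|a| != 1.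

From HB Require Import structures.
From mathcomp Require Import all_boot all_order all_algebra all_field.
From mathcomp Require Import reals.
From mathcomp Require Import zify ring.
Import Order.TTheory GRing.Theory Num.Theory.
Local Open Scope ring_scope.

(* An integral involution A <> +-1 has trace 0 and determinant -1: by
   Cayley-Hamilton, A^2 = 1 gives tr A * A = (1 + det A) * 1, and tr A <> 0
   would make A a scalar square root of 1.  For any integral B with trace 0 and
   determinant -1, L = A B has determinant 1 and A L A = B A = L^-1, so A
   reverses L.  L is Anosov as soon as |tr L| > 2: an eigenvalue z satisfies
   z^2 - tr L z + 1 = 0, and |z| = 1 would give tr L = z + z^-1 of modulus at
   most 2.  For A = [[a, b], [c, -a]] the partner B = -A^T gives
   tr (A B) = -(2 a^2 + b^2 + c^2) = -(2 + (b - c)^2); when b = c, A is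
   +-[[1, 0], [0, -1]] or +-[[0, 1], [1, 0]] and B = [[3, 8], [-1, -3]] gives
   tr (A B) = 6 a + 7 b.  Finally, two integral matrices inducing the same map
   of the torus are equal, since m t is an integer for all real t only if
   m = 0. *)

Definition mx2 {T : Type} (a b c d : T) : 'M[T]_2 :=
  \matrix_(i, j) if i == 0 then (if j == 0 then a else b)
                 else (if j == 0 then c else d).

Lemma ord2P (i : 'I_2) : i = 0 \/ i = 1.
Proof. by case: i => [[|[|k]] Hi]; [left; exact/val_inj | right; exact/val_inj |]. Qed.

Fact lift0_ord2 : lift ord0 ord0 = 1 :> 'I_2.
Proof. exact: val_inj. Qed.

Section Matrix2.

Context {R : comNzRingType}.
Implicit Types A B : 'M[R]_2.

Lemma mx2_eq A B : A 0 0 = B 0 0 -> A 0 1 = B 0 1 ->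
  A 1 0 = B 1 0 -> A 1 1 = B 1 1 -> A = B.
Proof.
move=> e00 e01 e10 e11; apply/matrixP => i j.
by case: (ord2P i) => ->; case: (ord2P j) => ->.
Qed.

Lemma mulmx2E m n (M : 'M[R]_(m, 2)) (N : 'M[R]_(2, n)) i j :
  (M *m N) i j = M i 0 * N 0 j + M i 1 * N 1 j.
Proof. by rewrite mxE !big_ord_recl big_ord0 addr0 lift0_ord2. Qed.

Lemma mxtrace2 A : \tr A = A 0 0 + A 1 1.
Proof. by rewrite /mxtrace !big_ord_recl big_ord0 addr0 lift0_ord2. Qed.

Lemma det_mx2 A : \det A = A 0 0 * A 1 1 - A 0 1 * A 1 0.
Proof.
rewrite (expand_det_row _ 0) !big_ord_recl big_ord0 /cofactor !det_mx11 !mxE /=.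
rewrite addr0 expr0 expr1 mul1r mulN1r mulrN.
by congr (A _ _ * A _ _ - A _ _ * A _ _); apply: val_inj.
Qed.

Lemma Cayley_Hamilton_mx2 A : A *m A = \tr A *: A - (\det A)%:M.
Proof. by rewrite mxtrace2 det_mx2; apply: mx2_eq; rewrite mulmx2E !mxE /=; ring. Qed.

End Matrix2.

Section Involution2.

Context {R : idomainType}.
Implicit Types A : 'M[R]_2.

Lemma involution_mxtrace0P A : \tr A = 0 -> A *m A = 1%:M <-> \det A = -1.
Proof.
rewrite Cayley_Hamilton_mx2 => ->; rewrite scale0r sub0r -raddfN /=.
split=> [/matrixP/(_ 0 0)|->]; last by rewrite opprK.
by rewrite !mxE /= !mulr1n => /eqP; rewrite eqr_oppLR => /eqP <-.
Qed.

Lemma mxtrace_involution A :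
  A *m A = 1%:M -> A != 1%:M -> A != - 1%:M -> \tr A = 0.
Proof.
move=> AA A_neq1 A_neqN1; apply/eqP; apply: contraT => tr_neq0.
have trA : \tr A *: A = (1 + \det A)%:M.
  by rewrite raddfD /= -AA Cayley_Hamilton_mx2 subrK.
have trA_ij i j : \tr A * A i j = (1 + \det A) *+ (i == j).
  by have := congr1 (fun M : 'M_2 => M i j) trA; rewrite !mxE.
have A_scalar : A = (A 0 0)%:M.
  apply: mx2_eq; rewrite !mxE ?mulr1n ?mulr0n //.
  - by move: (trA_ij 0 1) => /eqP; rewrite mulf_eq0 (negbTE tr_neq0) => /eqP.
  - by move: (trA_ij 1 0) => /eqP; rewrite mulf_eq0 (negbTE tr_neq0) => /eqP.
  - by apply: (mulfI tr_neq0); rewrite !trA_ij.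
have : A 0 0 ^+ 2 == 1.
  move: AA; rewrite {1 2}A_scalar -scalar_mxM => /matrixP/(_ 0 0).
  by rewrite !mxE eqxx !mulr1n expr2 => ->.
rewrite sqrf_eq1 => /orP[] /eqP a.
- by move: A_neq1; rewrite A_scalar a eqxx.
- by move: A_neqN1; rewrite A_scalar a raddfN eqxx.
Qed.

End Involution2.

Lemma invmx_mul_involutions (R : comUnitRingType) n (A B : 'M[R]_n) :
  A *m A = 1%:M -> B *m B = 1%:M -> invmx (A *m B) = B *m A.
Proof.
move=> AA BB.
have ABBA : A *m B *m (B *m A) = 1%:M by rewrite -mulmxA (mulmxA B) BB mul1mx AA.
have [AB_unit _] := mulmx1_unit ABBA.
by rewrite -[invmx _]mulmx1 -ABBA mulKmx.
Qed.

Lemma eigenvalue_mx2 (F : fieldType) (M : 'M[F]_2) z :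
  eigenvalue M z -> z ^+ 2 - \tr M * z + \det M = 0.
Proof.
case/eigenvalueP => v vM v_neq0.
have : (z ^+ 2 - \tr M * z + \det M) *: v = 0.
  have := congr1 (mulmx v) (Cayley_Hamilton_mx2 M).
  rewrite mulmxA vM -scalemxAl vM scalerA mulmxBr -scalemxAr vM mul_mx_scalar.
  rewrite scalerDl scalerBl -expr2 scalerA => ->.
  by rewrite addrAC subrK subrr.
by move/eqP; rewrite scaler_eq0 (negbTE v_neq0) orbF => /eqP.
Qed.

Lemma norm_le2_of_root_on_unit_circle (C : numFieldType) (z t : C) :
  `|z| = 1 -> z ^+ 2 - t * z + 1 = 0 -> `|t| <= 2.
Proof.
move=> z1 root_z.
have z_neq0 : z != 0 by rewrite -normr_eq0 z1 oner_neq0.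
have -> : t = z + z^-1.
  apply: (mulIf z_neq0); rewrite mulrDl mulVf // -expr2.
  by apply/eqP; rewrite eq_sym -subr_eq0 -root_z; apply/eqP; ring.
by rewrite (le_trans (ler_normD _ _)) // normfV z1 invr1.
Qed.

Lemma hyperbolic_mxtrace (L : 'M[int]_2) :
  \det L = 1 -> 4 < \tr L ^+ 2 -> hyperbolic L.
Proof.
move=> detL trL z /eigenvalue_mx2; rewrite trace_map_mx det_map_mx detL rmorph1.
apply: contraPN => /eqP /norm_le2_of_root_on_unit_circle le2 /le2.
rewrite -intr_norm -[2 : algC]/(2%:~R) ler_int ler_norml.
by move: (\tr L) trL => t; nia.
Qed.

Lemma exists_partner_mxtrace_gt2 (A : 'M[int]_2) :
  \tr A = 0 -> \det A = -1 ->
  exists B : 'M[int]_2, [/\ \tr B = 0, \det B = -1 & 4 < \tr (A *m B) ^+ 2].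
Proof.
rewrite mxtrace2 det_mx2 => trA detA.
have [b_eq_c | b_neq_c] := eqVneq (A 0 1) (A 1 0).
- exists (mx2 3 8 (-1) (-3)).
  rewrite !mxtrace2 det_mx2 !mulmx2E !mxE /=; split => //.
  move: (A 0 0) (A 0 1) (A 1 0) (A 1 1) trA detA b_eq_c => a b c d.
  nia.
- exists (- A^T).
  rewrite !mxtrace2 det_mx2 !mulmx2E !mxE /=; split.
  + by rewrite -opprD trA oppr0.
  + by rewrite !mulrNN [A 1 0 * _]mulrC.
  move: (A 0 0) (A 0 1) (A 1 0) (A 1 1) trA detA b_neq_c => a b c d tr det bc.
  have bc_sqr : 1 <= (b - c) * (b - c) by nia.
  nia.
Qed.

Lemma int_eq0_of_mulr_int (R : archiRealFieldType) (m : int) :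
  (forall t : R, m%:~R * t \is a Num.int) -> m = 0.
Proof.
move=> mt_int; apply/eqP; apply: contraT => m_neq0.
have mR_neq0 : m%:~R != 0 :> R by rewrite intr_eq0.
have /intrP[k] := mt_int (2 * m%:~R)^-1.
rewrite invfM mulrCA mulfV // mulr1 => half.
have k_gt0 : (0 : R) < k%:~R by rewrite -half invr_gt0 ltr0n.
have k_lt1 : (k%:~R : R) < 1 by rewrite -half invf_lt1 // ltr1n.
by move: k_gt0 k_lt1; rewrite ltr0z ltrz1; lia.
Qed.

Section Torus.

Context {R : realType}.
Implicit Types (M N : 'M[int]_2) (x : 'cV[R]_2).

Lemma tor_eq_refl x : tor_eq x x.
Proof. by move=> i; rewrite subrr rpred0. Qed.

Lemma lin_mapM M N x : lin_map M (lin_map N x) = lin_map (M *m N) x.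
Proof. by rewrite /lin_map mulmxA map_mxM. Qed.

Lemma lin_map1 x : lin_map 1%:M x = x.
Proof. by rewrite /lin_map map_mx1 mul1mx. Qed.

Lemma lin_mapN M x : lin_map (- M) x = - lin_map M x.
Proof. by rewrite /lin_map map_mxN mulNmx. Qed.

Lemma lin_map_tor_inj M N :
  (forall x, tor_eq (lin_map M x) (lin_map N x)) -> M = N.
Proof.
move=> MN; apply/matrixP => i j; apply/eqP; rewrite -subr_eq0; apply/eqP.
apply: (@int_eq0_of_mulr_int R) => t.
have := MN (t *: delta_mx j 0) i.
by rewrite /lin_map -!scalemxAr -!colE !mxE -mulrBr -rmorphB mulrC.
Qed.

End Torus.

Theorem proposition1 (R : realType) (A : 'M[int]_2) :
  unimodular A ->
  (* R o R = Id on T^2 *)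
  (forall x : 'cV[R]_2, tor_eq (lin_map A (lin_map A x)) x) ->
  (* R <> Id and R <> -Id on T^2 *)
  ~ (forall x : 'cV[R]_2, tor_eq (lin_map A x) x) ->
  ~ (forall x : 'cV[R]_2, tor_eq (lin_map A x) (- x)) ->
  exists L : 'M[int]_2,
    unimodular L /\ hyperbolic L /\
    (* R o f = f^{-1} o R on T^2 *)
    (forall x : 'cV[R]_2,
        tor_eq (lin_map A (lin_map L x)) (lin_map (invmx L) (lin_map A x))).
Proof.
move=> _ A_invol A_not_id A_not_opp.
have AA : A *m A = 1%:M.
  by apply: (@lin_map_tor_inj R) => x; rewrite -lin_mapM lin_map1.
have A_neq1 : A != 1%:M.
  apply/eqP => A1; apply: A_not_id => x.
  by rewrite A1 lin_map1; exact: tor_eq_refl.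
have A_neqN1 : A != - 1%:M.
  apply/eqP => AN1; apply: A_not_opp => x.
  by rewrite AN1 lin_mapN lin_map1; exact: tor_eq_refl.
have trA : \tr A = 0 by exact: mxtrace_involution.
have detA : \det A = -1 by apply/(involution_mxtrace0P A trA).
have [B [trB detB trAB]] := exists_partner_mxtrace_gt2 A trA detA.
have BB : B *m B = 1%:M by apply/(involution_mxtrace0P B trB).
have detAB : \det (A *m B) = 1 by rewrite det_mulmx detA detB mulrNN mul1r.
exists (A *m B); split; first by left.
split=> [|x]; first exact: hyperbolic_mxtrace.
rewrite !lin_mapM invmx_mul_involutions // mulmxA AA mul1mx -mulmxA AA mulmx1.
exact: tor_eq_refl.
Qed.
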